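(* Let $(A,\gamma)$ be a quasiordered set, $(X,\rho)$ a partially ordered set, and $f:A\to X$ a map such that for all $x,y\in A$, $(x,y)\in\gamma$ if and only if $(f(x),f(y))\in\rho$. Let $(X_1^{(i)})_{i\in I}$ be subsets of $X$ with $\gamma\cap\ker(f)\subseteq\ker_{X_1^{(i)}}(f)$ for all $i\in I$, and let $\{R_i\mid i\in I\}$ be linear extensions of $\rho$ with $\bigcap_{i\in I}R_i=\rho$. Then $$\bigcap_{i\in I}\bigl(\ker_{X_1^{(i)}}(f)\cup f^{-1}(R_i)\bigr)=\gamma,$$ and each $\ker_{X_1^{(i)}}(f)\cup f^{-1}(R_i)$ is a half-space on $A$. In particular, if $\kappa:A\to A/(\gamma\cap\gamma^{-1})$ is the canonical surjection and $\{R_i\mid i\in I\}$ are linear extensions of $r_\gamma$ with $\bigcap_{i\in I}R_i=r_\gamma$, then $\bigcap_{i\in I}\bigl((\gamma\cap\gamma^{-1})\cup\kappa^{-1}(R_i)\bigr)=\gamma$.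
   Context: A quasiorder on $A$ is a reflexive and transitive relation; $\Delta_A=\{(a,a)\mid a\in A\}$. A quasiorder $\alpha$ on $A$ is a half-space if there is a quasiorder $\beta$ on $A$ with $\alpha\cup\beta=A\times A$ and $\alpha\cap\beta=\Delta_A$. For $f:A\to X$, $X_1\subseteq X$ and a linear order $R$ on $X$ (strict part $<_R$): $\ker(f)=\{(a,b)\mid f(a)=f(b)\}$, $\ker_{X_1}(f)=\Delta_A\cup\{(a,b)\mid f(a)=f(b)\in X_1\}$, $f^{-1}(R)=\Delta_A\cup\{(a,b)\mid f(a)<_Rf(b)\}$. For a quasiorder $\gamma$, $r_\gamma$ is the induced partial order on $A/(\gamma\cap\gamma^{-1})$: $([a],[b])\in r_\gamma$ iff $(a,b)\in\gamma$. *)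

Definition rel (T : Type) := T -> T -> Prop.

Definition quasiorder {T : Type} (r : rel T) : Prop :=
  (forall a, r a a) /\ (forall a b c, r a b -> r b c -> r a c).

Definition partial_order {T : Type} (r : rel T) : Prop :=
  quasiorder r /\ (forall a b, r a b -> r b a -> a = b).

Definition linear_order {T : Type} (r : rel T) : Prop :=
  partial_order r /\ (forall a b, r a b \/ r b a).

Definition linear_extension {T : Type} (rho R : rel T) : Prop :=
  linear_order R /\ (forall a b, rho a b -> R a b).

Definition diag {T : Type} : rel T := fun a b => a = b.

Definition strict {T : Type} (R : rel T) : rel T := fun x y => R x y /\ x <> y.

Definition kerf {A X : Type} (f : A -> X) : rel A := fun a b => f a = f b.

Definition ker_on {A X : Type} (X1 : X -> Prop) (f : A -> X) : rel A :=
  fun a b => a = b \/ (f a = f b /\ X1 (f a)).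

Definition preim {A X : Type} (f : A -> X) (R : rel X) : rel A :=
  fun a b => a = b \/ strict R (f a) (f b).

Definition half_space {A : Type} (alpha : rel A) : Prop :=
  quasiorder alpha /\
  exists beta : rel A, quasiorder beta /\
    (forall a b, alpha a b \/ beta a b) /\
    (forall a b, (alpha a b /\ beta a b) <-> a = b).

(* r_gamma on a quotient Q of A presented by the canonical surjection kappa *)
Definition r_of {A Q : Type} (kappa : A -> Q) (gamma : rel A) : rel Q :=
  fun p q => exists a b, kappa a = p /\ kappa b = q /\ gamma a b.

(* Each relation [ker_{X1}(f) ∪ f^{-1}(R)] with [R] linear is a half-space: its
   complement in the sense of half-spaces is the relation of the same shape built
   from the complement of [X1] and the dual order of [R].  It contains [gamma]
   because [gamma ∩ ker f ⊆ ker_{X1}(f)] and [gamma ⊆ f^{-1}(rho) ⊆ f^{-1}(R)] off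
   [ker f]; conversely a pair in every such relation either lies in [ker f], hence
   in [gamma] by reflexivity of [rho], or lies in every [f^{-1}(R_i)], hence in
   [f^{-1}(rho) = gamma].  The statement about [r_gamma] is the case [X = A/(gamma ∩
   gamma^{-1})], [f = kappa], [X1 = X], where [ker_X(kappa) = gamma ∩ gamma^{-1}]. *)

From Stdlib Require Import Classical.

Definition halfspace_of {A X : Type} (X1 : X -> Prop) (f : A -> X) (R : rel X) : rel A :=
  fun a b => ker_on X1 f a b \/ preim f R a b.

Definition flip_rel {T : Type} (R : rel T) : rel T := fun x y => R y x.

Lemma linear_order_flip {T : Type} (R : rel T) :
  linear_order R -> linear_order (flip_rel R).
Proof.
  unfold flip_rel; intros [[[Rrefl Rtrans] Ranti] Rtot].
  repeat split; eauto.
Qed.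

Section HalfSpace.

Context {A X : Type} (X1 : X -> Prop) (f : A -> X) {R : rel X}.

Lemma quasiorder_halfspace_of : partial_order R -> quasiorder (halfspace_of X1 f R).
Proof.
  intros [[Rrefl Rtrans] Ranti]; unfold halfspace_of, ker_on, preim, strict.
  split; [auto|].
  intros a b c [[<-|[Eab Xa]]|[<-|[Rab Nab]]] [[<-|[Ebc Xb]]|[<-|[Rbc Nbc]]]; auto.
  - left; right; split; congruence.
  - right; right; rewrite Eab; auto.
  - right; right; rewrite <- Ebc; auto.
  - right; right; split; [eauto|].
    intros Eac; rewrite <- Eac in Rbc; auto.
Qed.

Lemma halfspace_of_total : linear_order R ->
  forall a b, halfspace_of X1 f R a b \/
              halfspace_of (fun x => ~ X1 x) f (flip_rel R) a b.
Proof.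
  intros [_ Rtot] a b; unfold halfspace_of, ker_on, preim, strict, flip_rel.
  destruct (classic (f a = f b)) as [E|E].
  - destruct (classic (X1 (f a))); [left|right]; left; right; auto.
  - destruct (Rtot (f a) (f b)); [left|right]; right; right; auto.
Qed.

Lemma halfspace_of_meet_compl : partial_order R ->
  forall a b, (halfspace_of X1 f R a b /\
               halfspace_of (fun x => ~ X1 x) f (flip_rel R) a b) <-> a = b.
Proof.
  intros [_ Ranti] a b; unfold halfspace_of, ker_on, preim, strict, flip_rel.
  split; [|intros <-; auto].
  intros [[[?|[Eab Xa]]|[?|[Rab Nab]]] [[?|[Eab' Xa']]|[?|[Rba Nba]]]];
    auto; try tauto; exfalso; auto.
Qed.

End HalfSpace.

Lemma half_space_halfspace_of {A X : Type} (X1 : X -> Prop) (f : A -> X) {R : rel X} :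
  linear_order R -> half_space (halfspace_of X1 f R).
Proof.
  intros HR; pose proof (proj1 HR) as HRpo.
  split; [exact (quasiorder_halfspace_of X1 f HRpo)|].
  exists (halfspace_of (fun x => ~ X1 x) f (flip_rel R)).
  split; [|split].
  - exact (quasiorder_halfspace_of _ f (proj1 (linear_order_flip R HR))).
  - exact (halfspace_of_total X1 f HR).
  - exact (halfspace_of_meet_compl X1 f HRpo).
Qed.

Section Intersection.

Context {A X I : Type} {gamma : rel A} {rho : rel X} {f : A -> X}.
Context {X1 : I -> X -> Prop} {R : I -> rel X}.
Hypothesis gamma_rho : forall x y, gamma x y <-> rho (f x) (f y).

Lemma halfspaces_of_gamma :
  (forall i a b, gamma a b /\ kerf f a b -> ker_on (X1 i) f a b) ->
  (forall i, linear_extension rho (R i)) ->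
  forall a b, gamma a b -> forall i, halfspace_of (X1 i) f (R i) a b.
Proof.
  intros Hker Hext a b Gab i; unfold halfspace_of, preim, strict.
  destruct (classic (f a = f b)) as [E|E]; [left; apply Hker; split; auto|].
  right; right; split; [apply (proj2 (Hext i)), gamma_rho, Gab | exact E].
Qed.

Lemma gamma_of_halfspaces :
  (forall x, rho x x) -> (forall x y, (forall i, R i x y) -> rho x y) ->
  forall a b, (forall i, halfspace_of (X1 i) f (R i) a b) -> gamma a b.
Proof.
  intros rho_refl HR a b H; apply gamma_rho.
  destruct (classic (f a = f b)) as [E|E]; [rewrite E; apply rho_refl|].
  apply HR; intros i.
  destruct (H i) as [[<-|[Eab _]]|[<-|[Rab _]]]; tauto.
Qed.

End Intersection.

Lemma halfspace_intersection {A : Type} (gamma : rel A) :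
  forall (X : Type) (rho : rel X) (f : A -> X),
     partial_order rho ->
     (forall x y, gamma x y <-> rho (f x) (f y)) ->
     forall (I : Type) (X1 : I -> X -> Prop) (R : I -> rel X),
     (forall i a b, gamma a b /\ kerf f a b -> ker_on (X1 i) f a b) ->
     (forall i, linear_extension rho (R i)) ->
     (forall x y, (forall i, R i x y) <-> rho x y) ->
     (forall a b, (forall i, halfspace_of (X1 i) f (R i) a b) <-> gamma a b) /\
     (forall i, half_space (halfspace_of (X1 i) f (R i))).
Proof.
  intros X rho f [[rho_refl _] _] Hgf I X1 R Hker Hext HR; split.
  - intros a b; split.
    + apply (gamma_of_halfspaces Hgf rho_refl (fun x y => proj1 (HR x y))).
    + apply (halfspaces_of_gamma Hgf Hker Hext).
  - intros i; exact (half_space_halfspace_of (X1 i) f (proj1 (Hext i))).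
Qed.

Section Quotient.

Context {A Q : Type} {gamma : rel A} {kappa : A -> Q}.
Hypothesis gamma_quasi : quasiorder gamma.
Hypothesis kappa_ker : forall a b, kappa a = kappa b <-> (gamma a b /\ gamma b a).

Lemma r_of_kappa a b : r_of kappa gamma (kappa a) (kappa b) <-> gamma a b.
Proof.
  destruct gamma_quasi as [_ Gtrans]; split; [|exists a, b; auto].
  intros [a' [b' [Ea [Eb G]]]].
  apply (Gtrans a a'); [apply kappa_ker; auto|].
  apply (Gtrans _ b'); [exact G | apply kappa_ker; auto].
Qed.

Lemma partial_order_r_of :
  (forall q, exists a, kappa a = q) -> partial_order (r_of kappa gamma).
Proof.
  intros Hsurj.
  repeat split.
  - intros p; destruct (Hsurj p) as [a <-].
    apply r_of_kappa, gamma_quasi.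
  - intros p q r; destruct (Hsurj p) as [a <-], (Hsurj q) as [b <-], (Hsurj r) as [c <-].
    rewrite !r_of_kappa; apply gamma_quasi.
  - intros p q; destruct (Hsurj p) as [a <-], (Hsurj q) as [b <-].
    rewrite !r_of_kappa; intros; apply kappa_ker; auto.
Qed.

Lemma ker_on_full_kappa a b :
  ker_on (fun _ => True) kappa a b <-> (gamma a b /\ gamma b a).
Proof.
  unfold ker_on; rewrite <- kappa_ker; split; [|auto].
  intros [<-|[E _]]; auto.
Qed.

End Quotient.

Theorem proposition2p8 (A : Type) (gamma : A -> A -> Prop) (Hgamma : quasiorder gamma) :
  (forall (X : Type) (rho : X -> X -> Prop) (f : A -> X),
     partial_order rho ->
     (forall x y, gamma x y <-> rho (f x) (f y)) ->
     forall (I : Type) (X1 : I -> X -> Prop) (R : I -> X -> X -> Prop),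
     (forall i a b, gamma a b /\ kerf f a b -> ker_on (X1 i) f a b) ->
     (forall i, linear_extension rho (R i)) ->
     (forall x y, (forall i, R i x y) <-> rho x y) ->
     (forall a b, (forall i, ker_on (X1 i) f a b \/ preim f (R i) a b) <-> gamma a b) /\
     (forall i, half_space (fun a b => ker_on (X1 i) f a b \/ preim f (R i) a b)))
  /\
  (forall (Q : Type) (kappa : A -> Q),
     (forall q, exists a, kappa a = q) ->
     (forall a b, kappa a = kappa b <-> (gamma a b /\ gamma b a)) ->
     forall (I : Type) (R : I -> Q -> Q -> Prop),
     (forall i, linear_extension (r_of kappa gamma) (R i)) ->
     (forall p q, (forall i, R i p q) <-> r_of kappa gamma p q) ->
     forall a b, (forall i, (gamma a b /\ gamma b a) \/ preim kappa (R i) a b) <-> gamma a b).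
Proof.
  split; [apply halfspace_intersection|].
  intros Q kappa Hsurj Hker I R Hext HR a b.
  assert (Hfull : forall (i : I) a' b', gamma a' b' /\ kerf kappa a' b' ->
                                       ker_on (fun _ => True) kappa a' b')
    by (intros i a' b' [_ E]; right; split; [exact E | trivial]).
  destruct (halfspace_intersection gamma Q (r_of kappa gamma) kappa
              (partial_order_r_of Hgamma Hker Hsurj)
              (fun x y => iff_sym (r_of_kappa Hgamma Hker x y))
              I (fun _ _ => True) R Hfull Hext HR) as [Hmeet _].
  rewrite <- Hmeet.
  split; intros H i; (destruct (H i); [left; apply (ker_on_full_kappa Hker)|right]; auto).
Qed.
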